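(* For every single-item auction setting with $n$ bidders, binary signals and interdependent SOS valuations, there exists an ex post IC-IR randomized mechanism that achieves a $2$-approximation to the optimal welfare; that is, there is an ex post IC-IR mechanism $M=(x,p)$ such that for every signal profile $s\in\{0,1\}^n$, $$\sum_{i=1}^n x_i(s)\,v_i(s)\;\ge\;\tfrac12\max_{i\in[n]} v_i(s).$$
   Context: Single-item auction with bidders $[n]$. Each bidder $i$ has a private binary signal $s_i\in\{0,1\}$; a signal profile $s=(s_1,\dots,s_n)$ is identified with the set $S=\{i: s_i=1\}\subseteq[n]$. Each bidder $i$ has a publicly known valuation $v_i:2^{[n]}\to\mathbb{R}_{\ge0}$ (its value for the item given the set of high signals), which is weakly increasing (monotone: $S\subseteq T\Rightarrow v_i(S)\le v_i(T)$) and strictly increasing in its own signal ($v_i(S\cup\{i\})>v_i(S)$ for $i\notin S$). Valuations are SOS (submodular over signals) if each $v_i$ is a submodular set function: for all $S\subseteq T\subseteq[n]$ and $\ell\in[n]\setminus T$, $v_i(S\cup\{\ell\})-v_i(S)\ge v_i(T\cup\{\ell\})-v_i(T)$. A randomized mechanism $M=(x,p)$ maps each reported signal profile $s$ to allocation probabilities $x(s)=(x_1(s),\dots,x_n(s))$ with $x_i(s)\ge0$ and $\sum_i x_i(s)\le1$ (feasibility), and expected payments $p(s)=(p_1(s),\dots,p_n(s))$. $M$ is ex post IC-IR if for every bidder $i$, every true profile $s$ and every report $s_i'$, the quantity $x_i(s_{-i},s_i')v_i(s)-p_i(s_{-i},s_i')$ is nonnegative when $s_i'=s_i$ and is maximized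 over $s_i'$ at $s_i'=s_i$. *)

From mathcomp Require Import all_boot all_order all_algebra.
From mathcomp Require Import reals.
Set Implicit Arguments. Unset Strict Implicit. Unset Printing Implicit Defensive.
Import Order.TTheory GRing.Theory Num.Theory.
Local Open Scope ring_scope.

(* Bidders are 'I_n; a signal profile s in {0,1}^n is identified with the set
   S = {i | s_i = 1} : {set 'I_n}. A valuation profile is
   v : 'I_n -> {set 'I_n} -> R, with v i S the value of bidder i. *)

Definition monotone_val (n : nat) (R : realType) (f : {set 'I_n} -> R) : Prop :=
  forall S T : {set 'I_n}, S \subset T -> f S <= f T.

Definition strict_own (n : nat) (R : realType) (i : 'I_n) (f : {set 'I_n} -> R) : Prop :=
  forall S : {set 'I_n}, i \notin S -> f S < f (i |: S).

Definition submodular_val (n : nat) (R : realType) (f : {set 'I_n} -> R) : Prop :=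
  forall (S T : {set 'I_n}) (l : 'I_n), S \subset T -> l \notin T ->
    f (l |: S) - f S >= f (l |: T) - f T.

Definition SOS_valuations (n : nat) (R : realType) (v : 'I_n -> {set 'I_n} -> R) : Prop :=
  forall i : 'I_n,
    (forall S, 0 <= v i S) /\ monotone_val (v i) /\ strict_own i (v i)
    /\ submodular_val (v i).

Definition report (n : nat) (S : {set 'I_n}) (i : 'I_n) (b : bool) : {set 'I_n} :=
  if b then i |: S else S :\ i.

(* randomized mechanism: allocation probabilities x S i, expected payments p S i *)
Definition feasible (n : nat) (R : realType) (x : {set 'I_n} -> 'I_n -> R) : Prop :=
  forall S : {set 'I_n}, (forall i, 0 <= x S i) /\ \sum_(i < n) x S i <= 1.

Definition utility (n : nat) (R : realType) (v : 'I_n -> {set 'I_n} -> R)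
  (x p : {set 'I_n} -> 'I_n -> R) (i : 'I_n) (S : {set 'I_n}) (b : bool) : R :=
  x (report S i b) i * v i S - p (report S i b) i.

Definition expost_IC_IR (n : nat) (R : realType) (v : 'I_n -> {set 'I_n} -> R)
  (x p : {set 'I_n} -> 'I_n -> R) : Prop :=
  forall (i : 'I_n) (S : {set 'I_n}),
    0 <= utility v x p i S (i \in S) /\
    forall b : bool, utility v x p i S b <= utility v x p i S (i \in S).

(* Mechanism: let [top X] be a bidder of highest value at profile X and
   [top_in S] one of highest value among the high-signal bidders S.  When the
   top bidder has a low signal and the high-signal bidders cannot certify half
   of her value, half of the item is reserved for her.  Monotonicity of the
   allocation then forces half of the item to every bidder who would get that
   reserved half by lowering her own signal; whatever is left goes to
   [top_in S], and threshold payments make the mechanism ex post IC-IR.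
   Submodularity is what keeps this feasible: three such "promised" bidders
   would violate a cyclic inequality, and two of them already cover the value
   of the top bidder, so no half is then reserved.  The welfare bound is a
   case analysis on the number of promised bidders. *)

From mathcomp Require Import all_boot all_order all_algebra.
From mathcomp Require Import reals lra.
Import Order.TTheory GRing.Theory Num.Theory.
Local Open Scope ring_scope.
Set Implicit Arguments. Unset Strict Implicit.

Lemma submodular_le_setD1_pair (R : realType) (n : nat) (f : {set 'I_n} -> R)
    (S : {set 'I_n}) (a b : 'I_n) :
  (forall T, 0 <= f T) -> submodular_val f ->
  a \in S -> b \in S -> a != b -> f S <= f (S :\ a) + f (S :\ b).
Proof.
move=> f_ge0 f_sub aS bS ab.
have aSb : a \in S :\ b by rewrite !inE ab.
have := f_sub (S :\ b :\ a) (S :\ a) a (setSD _ (subD1set S b)) ltac:(by rewrite setD11).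
rewrite !setD1K //; have := f_ge0 (S :\ b :\ a); lra.
Qed.

Lemma setD1_id (T : finType) (A : {set T}) (a : T) : a \notin A -> A :\ a = A.
Proof. by move=> aA; apply/setDidPl; rewrite disjoint_sym disjoints1. Qed.

Lemma report_setD1 (n : nat) (S : {set 'I_n}) (i : 'I_n) (b : bool) :
  report S i b :\ i = S :\ i.
Proof. by case: b; rewrite /report ?setDUl ?setDv ?set0U // setDDl setUid. Qed.

Lemma report_truthful (n : nat) (S : {set 'I_n}) (i : 'I_n) :
  report S i (i \in S) = S.
Proof.
rewrite /report; case: ifP => iS; first by apply/setUidPr; rewrite sub1set.
by rewrite setD1_id ?iS.
Qed.

Definition threshold_price (R : realType) (n : nat) (v : 'I_n -> {set 'I_n} -> R)
    (x : {set 'I_n} -> 'I_n -> R) (S : {set 'I_n}) (i : 'I_n) : R :=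
  x S i * v i (S :\ i).

Lemma threshold_price_IC_IR (R : realType) (n : nat) (v : 'I_n -> {set 'I_n} -> R)
    (x : {set 'I_n} -> 'I_n -> R) :
  (forall i, monotone_val (v i)) -> (forall S i, 0 <= x S i) ->
  (forall (S : {set 'I_n}) i, i \notin S -> x S i <= x (i |: S) i) ->
  expost_IC_IR v x (threshold_price v x).
Proof.
move=> v_mono x_ge0 x_mono i S.
have gain_ge0 : 0 <= v i S - v i (S :\ i) by rewrite subr_ge0 v_mono ?subD1set.
have utilityE b : utility v x (threshold_price v x) i S b =
    x (report S i b) i * (v i S - v i (S :\ i)).
  by rewrite /utility /threshold_price report_setD1 mulrBr.
split => [|b]; rewrite !utilityE report_truthful; first exact: mulr_ge0.
have [iS|iS] := boolP (i \in S); last first.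
  by rewrite setD1_id // subrr !mulr0.
apply: ler_wpM2r => //; case: b; first by move: (report_truthful S i); rewrite iS => ->.
by have := x_mono (S :\ i) i; rewrite setD11 setD1K //; apply.
Qed.

Section Mechanism.

Variables (R : realType) (n : nat) (v : 'I_n -> {set 'I_n} -> R).
Hypothesis sos_v : SOS_valuations v.
Implicit Types (S T X : {set 'I_n}) (a b c i j k m : 'I_n).

Lemma val_ge0 i S : 0 <= v i S.
Proof. by case: (sos_v i). Qed.

Lemma val_mono i : monotone_val (v i).
Proof. by case: (sos_v i) => _ []. Qed.

Lemma val_setD1_le i j S : v i (S :\ j) <= v i S.
Proof. by rewrite val_mono ?subD1set. Qed.

Lemma val_setD1_lt i S : i \in S -> v i (S :\ i) < v i S.
Proof.
by move=> iS; case: (sos_v i) => _ [_ [own _]]; rewrite -{2}(setD1K iS) own ?setD11.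
Qed.

Lemma val_le_setD1_pair i S a b :
  a \in S -> b \in S -> a != b -> v i S <= v i (S :\ a) + v i (S :\ b).
Proof.
case: (sos_v i) => v_ge0 [_ [_ v_sub]]; exact: submodular_le_setD1_pair.
Qed.

Variable top : {set 'I_n} -> 'I_n.
Hypothesis top_max : forall X k, v k X <= v (top X) X.

Lemma le_self_top_pair S i j k : i \in S -> j \in S -> i != j ->
  top (S :\ i) = i -> top (S :\ j) = j -> v k S <= v i S + v j S.
Proof.
move=> iS jS ij top_i top_j.
have := val_le_setD1_pair k iS jS ij.
have := top_max (S :\ i) k; have := top_max (S :\ j) k; rewrite top_i top_j.
have := val_setD1_le i i S; have := val_setD1_le j j S; lra.
Qed.

Definition reserved X : bool :=
  (top X \notin X) &&
  ([forall k in X, 2 * v k X < v (top X) X] ||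
   [exists m in X, (top (X :\ m) == m) &&
                   [forall k in X, v m X + v k X < v (top X) X]]).

Definition promised S : {set 'I_n} :=
  [set i in S | reserved (S :\ i) && (top (S :\ i) == i)].

Lemma promised_self_top S i : i \in promised S -> i \in S /\ top (S :\ i) = i.
Proof. by rewrite inE => /and3P[iS _ /eqP]. Qed.

Lemma promised_gap S a b c : a \in promised S -> b \in S -> c \in S ->
  a != b -> a != c -> b != c ->
  v b (S :\ a) + v c (S :\ a) < v a (S :\ b) + v a (S :\ c).
Proof.
rewrite inE => /and3P[aS res_a /eqP top_a] bS cS ab ac bc.
set X := S :\ a in res_a top_a *.
have bX : b \in X by rewrite !inE eq_sym ab.
have cX : c \in X by rewrite !inE eq_sym ac.
have gain : v a X < v a (S :\ b) + v a (S :\ c).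
  exact: lt_le_trans (val_setD1_lt aS) (val_le_setD1_pair a bS cS bc).
move: res_a; rewrite /reserved top_a => /andP[_ /orP[/forall_inP twice|]].
  by have := twice b bX; have := twice c cX; lra.
case/exists_inP=> m mX /andP[/eqP top_m /forall_inP pair].
have shift j : j \in X -> m != j -> v m X + v j X < v a X -> v j X < v a (S :\ j).
  move=> jX; rewrite eq_sym => jm.
  have := val_le_setD1_pair a jX mX jm.
  have := top_max (X :\ m) a; rewrite top_m.
  have := val_setD1_le m m X.
  have : v a (X :\ j) <= v a (S :\ j) by rewrite val_mono // setSD // subD1set.
  lra.
have [mb|mb] := eqVneq m b; first by have := pair c cX; rewrite mb; lra.
have [mc|mc] := eqVneq m c; first by have := pair b bX; rewrite mc; lra.
have := shift b bX mb (pair b bX); have := shift c cX mc (pair c cX); lra.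
Qed.

(* Summed cyclically over three promised bidders, both sides of
   [promised_gap] add up to the same six values. *)
Lemma card_promised_le2 S : (#|promised S| <= 2)%N.
Proof.
rewrite leqNgt; apply/card_gt2P => -[a [b [c [[aP bP cP] [ab bc ca]]]]].
have inS d : d \in promised S -> d \in S by case/promised_self_top.
have [ac ba cb] : [/\ a != c, b != a & c != b] by split; rewrite eq_sym.
have := promised_gap aP (inS b bP) (inS c cP) ab ac bc.
have := promised_gap bP (inS c cP) (inS a aP) bc ba ca.
have := promised_gap cP (inS a aP) (inS b bP) ca cb ab.
lra.
Qed.

Lemma card_promised_le1 S : reserved S -> (#|promised S| <= 1)%N.
Proof.
move=> res_S; rewrite leqNgt; apply/card_gt1P => -[i [j [iP jP ij]]].
have [iS top_i] := promised_self_top iP; have [jS top_j] := promised_self_top jP.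
move: res_S; rewrite /reserved => /andP[_ /orP[/forall_inP twice|]].
  have := le_self_top_pair (top S) iS jS ij top_i top_j.
  by have := twice i iS; have := twice j jS; lra.
case/exists_inP=> m mS /andP[/eqP top_m /forall_inP pair].
have [l [lS lm top_l]] : exists l, [/\ l \in S, l != m & top (S :\ l) = l].
  by have [mi|mi] := eqVneq m i; [exists j; rewrite mi eq_sym | exists i; rewrite eq_sym].
have := le_self_top_pair (top S) lS mS lm top_l top_m.
by have := pair l lS; lra.
Qed.

Definition residual S : R :=
  1 - #|promised S|%:R / 2 - (if reserved S then 1 / 2 else 0).

Lemma residual_ge0 S : 0 <= residual S.
Proof.
rewrite /residual; case: ifP => [res_S|_].
  have : #|promised S|%:R <= 1 :> R by rewrite lern1 card_promised_le1.
  lra.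
have : #|promised S|%:R <= 2 :> R by rewrite ler_nat card_promised_le2.
lra.
Qed.

Variable top_in : {set 'I_n} -> 'I_n.

Definition alloc S i : R :=
  (if i \in promised S then 1 / 2 else 0)
  + (if reserved S && (i == top S) then 1 / 2 else 0)
  + (if (top_in S \in S) && (i == top_in S) then residual S else 0).

Lemma alloc_ge0 S i : 0 <= alloc S i.
Proof.
have := residual_ge0 S; rewrite /alloc.
by case: (_ \in _); case: (_ && _); case: (_ && _); lra.
Qed.

Lemma sum_alloc_weighted S (w : 'I_n -> R) :
  \sum_i alloc S i * w i =
  (\sum_(i in promised S) w i) / 2
  + (if reserved S then w (top S) / 2 else 0)
  + (if top_in S \in S then residual S * w (top_in S) else 0).
Proof.
have single (b : bool) j (c : R) :
    \sum_i (if b && (i == j) then c else 0) * w i = if b then c * w j else 0.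
  rewrite (bigD1 j) //= eqxx andbT big1 ?addr0 => [|i /negbTE->].
    by case: b; rewrite ?mul0r.
  by rewrite andbF mul0r.
have promisedE : \sum_i (if i \in promised S then 1 / 2 else 0) * w i =
    (\sum_(i in promised S) w i) / 2.
  rewrite mulr_suml [RHS]big_mkcond; apply: eq_bigr => i _.
  by case: ifP; rewrite ?mul0r // mul1r mulrC.
under eq_bigr do rewrite !mulrDl.
by rewrite !big_split /= !single promisedE mul1r [2^-1 * _]mulrC.
Qed.

Lemma feasible_alloc : feasible alloc.
Proof.
move=> S; split=> [i|]; first exact: alloc_ge0.
have := sum_alloc_weighted S (fun=> 1); under eq_bigr do rewrite mulr1.
rewrite sumr_const mulr1 => ->; have := residual_ge0 S; rewrite /residual.
by case: (top_in S \in S); case: reserved; lra.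
Qed.

Lemma alloc_monotone T i : i \notin T -> alloc T i <= alloc (i |: T) i.
Proof.
move=> iT; have := residual_ge0 (i |: T); have := residual_ge0 T.
have promised_i : (i \in promised (i |: T)) = reserved T && (i == top T).
  by rewrite inE setU11 setU1K // eq_sym.
have not_promised : (i \in promised T) = false by rewrite inE (negbTE iT).
have not_top_in : (top_in T \in T) && (i == top_in T) = false.
  by apply/andP => -[+ /eqP ie]; rewrite -ie (negbTE iT).
rewrite /alloc promised_i not_promised not_top_in.
by case: (_ && _); case: (_ && _); case: (_ && _); lra.
Qed.

Hypothesis top_in_max :
  forall S k, k \in S -> top_in S \in S /\ v k S <= v (top_in S) S.

Lemma unreserved_bounds S : ~~ reserved S ->
  [/\ top_in S \in S, v (top S) S <= 2 * v (top_in S) S &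
      forall m, m \in S -> top (S :\ m) = m ->
        v (top S) S <= v m S + v (top_in S) S].
Proof.
rewrite /reserved negb_and negbK => /orP[topS|].
  have [top_inS top_le] := top_in_max topS.
  split=> // [|m _ _]; [have := val_ge0 (top_in S) S | have := val_ge0 m S]; lra.
rewrite negb_or => /andP[/forall_inPn[k kS]]; rewrite -leNgt => twice_k.
move=> /exists_inPn not_pair; have [top_inS le_k] := top_in_max kS.
split=> [//||m mS top_m]; first lra.
have := not_pair m mS; rewrite top_m eqxx => /forall_inPn[l lS].
by rewrite -leNgt; have [_ le_l] := top_in_max lS; lra.
Qed.

Lemma welfare_alloc_ge_half_top S : v (top S) S / 2 <= \sum_i alloc S i * v i S.
Proof.
rewrite sum_alloc_weighted.
have P_ge0 : 0 <= \sum_(i in promised S) v i S by apply: sumr_ge0 => i _; exact: val_ge0.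
have res_ge0 : 0 <= (if top_in S \in S then residual S * v (top_in S) S else 0).
  by case: ifP => // _; rewrite mulr_ge0 ?residual_ge0 ?val_ge0.
case res_S: (reserved S); first lra.
have [top_inS twice pair] := unreserved_bounds (negbT res_S).
rewrite top_inS /residual res_S.
move: (card_promised_le2 S); case cardP: #|promised S| => [|[|[|//]]] _.
- by move/cards0_eq: cardP => ->; rewrite big_set0; lra.
- move/eqP/cards1P: cardP => -[m Pm]; rewrite Pm big_set1.
  have [mS top_m] : m \in S /\ top (S :\ m) = m by apply: promised_self_top; rewrite Pm set11.
  by have := pair m mS top_m; lra.
- move/eqP/cards2P: cardP => -[i [j [ij Pij]]]; rewrite Pij big_setU1 ?inE //= big_set1.
  have [iS top_i] : i \in S /\ top (S :\ i) = i by apply: promised_self_top; rewrite Pij !inE eqxx.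
  have [jS top_j] : j \in S /\ top (S :\ j) = j by apply: promised_self_top; rewrite Pij !inE eqxx orbT.
  by have := le_self_top_pair (top S) iS jS ij top_i top_j; lra.
Qed.

End Mechanism.

Lemma exists_argmax (d : Order.disp_t) (O : orderType d) (A : Type) (I : finType)
    (i0 : I) (f : A -> I -> O) :
  exists g : A -> I, forall a k, (f a k <= f a (g a))%O.
Proof.
exists (fun a => [arg max_(k > i0) f a k]%O) => a k.
by case: arg_maxP => // j _; apply.
Qed.

Lemma exists_argmax_in (d : Order.disp_t) (O : orderType d) (I : finType)
    (i0 : I) (f : {set I} -> I -> O) :
  exists g : {set I} -> I,
    forall (S : {set I}) k, k \in S -> g S \in S /\ (f S k <= f S (g S))%O.
Proof.
exists (fun S : {set I} => if [pick k in S] is Some k0 then [arg max_(k > k0 in S) f S k]%O else i0).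
move=> S k kS; case: pickP => [k0 k0S|/(_ k)]; last by rewrite kS.
by case: arg_maxP => // j jS j_max; split=> //; apply: j_max.
Qed.

Unset Implicit Arguments.

Theorem theorem1 (R : realType) (n : nat) (v : 'I_n -> {set 'I_n} -> R) :
  SOS_valuations v ->
  exists x p : {set 'I_n} -> 'I_n -> R,
    feasible x /\ expost_IC_IR v x p /\
    forall (S : {set 'I_n}) (i : 'I_n),
      \sum_(j < n) x S j * v j S >= v i S / 2.
Proof.
move=> sos_v; case: n v sos_v => [|n] v sos_v.
  exists (fun _ _ => 0), (fun _ _ => 0); split; last by split=> [[]|S []].
  by move=> S; split=> [[]|]; rewrite // big_ord0.
have [top top_max] := exists_argmax ord0 (fun X k => v k X).
have [top_in top_in_max] := exists_argmax_in ord0 (fun S k => v k S).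
pose x := alloc v top top_in.
exists x, (threshold_price v x); split; first exact: feasible_alloc.
split.
  apply: threshold_price_IC_IR => [i|S i|S i]; first exact: val_mono.
    exact: alloc_ge0.
  exact: alloc_monotone.
move=> S i; have := top_max S i.
have := welfare_alloc_ge_half_top sos_v top_max top_in_max S; lra.
Qed.
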